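(* Let $(G,\mathcal{T},(A^\circ,B^\circ),k)$ be a Terminal Separation instance, let $\mathcal{T}'$ be the set of terminal pairs disjoint from $A^\circ\cup B^\circ$, and let $\{s,t\}\in\mathcal{T}'$. Suppose $(A_s,B_t)$ and $(A_s',B_t')$ are maximal terminal separations, each of minimum cost among terminal separations extending $(A^\circ\cup\{s\},B^\circ\cup\{t\})$, and that neither of them contains in the union of its two sides any terminal pair of $\mathcal{T}'$ other than $\{s,t\}$. Then (a) $d(A_s)=d(A_s')$ and $d(B_t)=d(B_t')$; (b) $(A_s\cap A_s',B_t\cup B_t')$ and $(A_s\cup A_s',B_t\cap B_t')$ are also terminal separations of minimum cost among separations extending $(A^\circ\cup\{s\},B^\circ\cup\{t\})$; (c) $A_s\cup B_t=A_s'\cup B_t'$.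
   Context: Graphs may have multiple edges but no loops; $d(X)$ is the number of edges with exactly one endpoint in $X$. For a family $\mathcal{T}$ of pairwise disjoint vertex pairs (terminals are their vertices), a terminal separation is a pair $(A,B)$ of disjoint vertex sets such that each pair in $\mathcal{T}$ either has one vertex in $A$ and one in $B$ or is disjoint from $A\cup B$; $(A',B')$ extends $(A,B)$ if $A\subseteq A'$, $B\subseteq B'$; cost $c(A,B)=(d(A)+d(B))/2$; a terminal separation is maximal if every other terminal separation extending it has strictly larger cost. A Terminal Separation instance $(G,\mathcal{T},(A^\circ,B^\circ),k)$ has every terminal of degree at most one and $(A^\circ,B^\circ)$ a terminal separation. *)

From mathcomp Require Import all_boot all_order all_algebra.
Set Implicit Arguments. Unset Strict Implicit. Unset Printing Implicit Defensive.
Import GRing.Theory Num.Theory.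

(* A multigraph without loops: finite vertex type V, finite edge type E,
   endpoints src e, tgt e (the orientation is irrelevant), with src e <> tgt e. *)
Definition loopless (V E : finType) (src tgt : E -> V) : Prop :=
  forall e, src e != tgt e.

Definition dcut (V E : finType) (src tgt : E -> V) (X : {set V}) : nat :=
  #|[set e : E | (src e \in X) != (tgt e \in X)]|.

(* degree of a vertex = d({v}) (graph is loopless) *)
Definition deg (V E : finType) (src tgt : E -> V) (v : V) : nat :=
  dcut src tgt [set v].

Definition terminal_family (V : finType) (T : {set {set V}}) : Prop :=
  (forall P, P \in T -> #|P| = 2) /\ trivIset T.

Definition tsep (V : finType) (T : {set {set V}}) (A B : {set V}) : Prop :=
  [disjoint A & B] /\
  forall P, P \in T ->
    (#|P :&: A| = 1 /\ #|P :&: B| = 1) \/ [disjoint P & A :|: B].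

Definition extends (V : finType) (A B A' B' : {set V}) : Prop :=
  A \subset A' /\ B \subset B'.

Definition cost (V E : finType) (src tgt : E -> V) (A B : {set V}) : rat :=
  ((dcut src tgt A + dcut src tgt B)%:R / 2%:R)%R.

Definition maximal_tsep (V E : finType) (src tgt : E -> V) (T : {set {set V}})
    (A B : {set V}) : Prop :=
  tsep T A B /\
  forall A' B', tsep T A' B' -> extends A B A' B' -> (A', B') <> (A, B) ->
    (cost src tgt A B < cost src tgt A' B')%R.

Definition min_ext_tsep (V E : finType) (src tgt : E -> V) (T : {set {set V}})
    (A0 B0 A B : {set V}) : Prop :=
  tsep T A B /\ extends A0 B0 A B /\
  forall A' B', tsep T A' B' -> extends A0 B0 A' B' ->
    (cost src tgt A B <= cost src tgt A' B')%R.

(* Terminal Separation instance (the budget k plays no role here) *)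
Definition ts_instance (V E : finType) (src tgt : E -> V) (T : {set {set V}})
    (A0 B0 : {set V}) : Prop :=
  loopless src tgt /\ terminal_family T /\
  (forall v, v \in cover T -> deg src tgt v <= 1) /\ tsep T A0 B0.

Definition Tfree (V : finType) (T : {set {set V}}) (A0 B0 : {set V}) : {set {set V}} :=
  [set P in T | [disjoint P & A0 :|: B0]].

From mathcomp Require Import all_boot all_order all_algebra.
From mathcomp Require Import zify.
Import GRing.Theory Num.Theory.
Set Implicit Arguments. Unset Strict Implicit. Unset Printing Implicit Defensive.

(* Let W be the union of the four sides.  A pair of T' other than
   {s,t} lies in neither union, hence misses W; so every disjoint (X, Y) with
   s |: A0 <= X, t |: B0 <= Y and X :|: Y <= W is a terminal separation and
   costs at least the minimum c.  Submodularity of d on both sides then forces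
   the two crossed pairs to cost exactly c.  Posimodularity shows that
   ((As :|: As') :\: Bt, (Bt :|: Bt') :\: As) extends (As, Bt) at cost at most
   c, so by maximality it is (As, Bt): the primed sides lie in As :|: Bt, and
   symmetrically, so the two unions agree.  With equal unions, posimodularity
   and the bound c give d As = d As' and d Bt = d Bt'. *)

Section Cuts.

Variables (V E : finType) (src tgt : E -> V).
Local Notation d := (dcut src tgt).

Lemma dcutE (X : {set V}) :
  d X = \sum_e ((src e \in X) != (tgt e \in X) : nat).
Proof.
rewrite /dcut -sum1_card big_mkcond /=; apply: eq_bigr => e _.
by rewrite inE; case: (_ != _).
Qed.

Lemma dcut_submodular (X Y : {set V}) : d (X :&: Y) + d (X :|: Y) <= d X + d Y.
Proof.
rewrite !dcutE -!big_split /=; apply: leq_sum => e _; rewrite !inE.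
by case: (src e \in X); case: (src e \in Y); case: (tgt e \in X); case: (tgt e \in Y).
Qed.

Lemma dcut_posimodular (X Y : {set V}) : d (X :\: Y) + d (Y :\: X) <= d X + d Y.
Proof.
rewrite !dcutE -!big_split /=; apply: leq_sum => e _; rewrite !inE.
by case: (src e \in X); case: (src e \in Y); case: (tgt e \in X); case: (tgt e \in Y).
Qed.

Lemma cost_leE (A B A' B' : {set V}) :
  (cost src tgt A B <= cost src tgt A' B')%R = (d A + d B <= d A' + d B').
Proof. by rewrite /cost ler_pM2r ?invr_gt0 ?ltr0n // ler_nat. Qed.

Lemma cost_ltE (A B A' B' : {set V}) :
  (cost src tgt A B < cost src tgt A' B')%R = (d A + d B < d A' + d B').
Proof. by rewrite /cost ltr_pM2r ?invr_gt0 ?ltr0n // ltr_nat. Qed.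

End Cuts.

Section TerminalSeparations.

Variable V : finType.
Implicit Types (T : {set {set V}}) (P A B X Y : {set V}).

Lemma cardsIU_disjoint P A B :
  [disjoint A & B] -> #|P :&: (A :|: B)| = #|P :&: A| + #|P :&: B|.
Proof.
move=> dAB; rewrite setIUr -cardsUI setIACA setIid (disjoint_setI0 dAB).
by rewrite setI0 cards0 addn0.
Qed.

Lemma split_subset P A B :
  #|P| = 2 -> [disjoint A & B] -> #|P :&: A| = 1 -> #|P :&: B| = 1 ->
  P \subset A :|: B.
Proof.
move=> P2 dAB PA PB; apply/setIidPl/eqP.
by rewrite eqEcard subsetIl cardsIU_disjoint // PA PB P2.
Qed.

Lemma pair_split P X Y :
  #|P| = 2 -> [disjoint X & Y] -> 0 < #|P :&: X| -> 0 < #|P :&: Y| ->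
  #|P :&: X| = 1 /\ #|P :&: Y| = 1.
Proof.
move=> P2 dXY; have := subset_leq_card (subsetIl P (X :|: Y)).
rewrite cardsIU_disjoint // P2; lia.
Qed.

Lemma tsep_disjoint_of_not_subset T A B P :
  terminal_family T -> tsep T A B -> P \in T -> ~~ (P \subset A :|: B) ->
  [disjoint P & A :|: B].
Proof.
move=> [card2 _] [dAB sepAB] PT nsubP.
have [[PA PB]|//] := sepAB P PT.
by rewrite (split_subset (card2 P PT) dAB PA PB) in nsubP.
Qed.

(* Pairs meeting [A0 :|: B0] are split by [(A0, B0)], hence by any disjoint
   extension of it. *)
Lemma tsep_extend T A0 B0 X Y :
  terminal_family T -> tsep T A0 B0 ->
  [disjoint X & Y] -> A0 \subset X -> B0 \subset Y ->
  (forall P, P \in Tfree T A0 B0 ->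
     (#|P :&: X| = 1 /\ #|P :&: Y| = 1) \/ [disjoint P & X :|: Y]) ->
  tsep T X Y.
Proof.
move=> [card2 _] [_ sepA0B0] dXY A0X B0Y sepfree; split=> // P PT.
have [dP|ndP] := boolP [disjoint P & A0 :|: B0].
  by apply: sepfree; rewrite inE PT dP.
have [[PA0 PB0]|dP] := sepA0B0 P PT; last by rewrite dP in ndP.
left; apply: pair_split (card2 P PT) dXY _ _.
  by rewrite (leq_trans _ (subset_leq_card (setIS P A0X))) ?PA0.
by rewrite (leq_trans _ (subset_leq_card (setIS P B0Y))) ?PB0.
Qed.

End TerminalSeparations.

Definition admissible_sep (V : finType) (S R W X Y : {set V}) : bool :=
  [&& [disjoint X & Y], S \subset X, R \subset Y & X :|: Y \subset W].

Definition min_admissible (V E : finType) (src tgt : E -> V)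
    (S R W A B : {set V}) : Prop :=
  admissible_sep S R W A B /\
  forall X Y, admissible_sep S R W X Y ->
    dcut src tgt A + dcut src tgt B <= dcut src tgt X + dcut src tgt Y.

Definition max_admissible (V E : finType) (src tgt : E -> V)
    (S R W A B : {set V}) : Prop :=
  forall X Y, admissible_sep S R W X Y -> A \subset X -> B \subset Y ->
    dcut src tgt X + dcut src tgt Y <= dcut src tgt A + dcut src tgt B ->
    X = A /\ Y = B.

Section Admissible.

Variables (V E : finType) (src tgt : E -> V) (T : {set {set V}}).
Local Notation d := (dcut src tgt).
Implicit Types (S R W A B X Y : {set V}).

Lemma admissible_extends S R W X Y :
  admissible_sep S R W X Y -> extends S R X Y.
Proof. by case/and4P. Qed.

Lemma tsep_within A0 B0 (s t : V) A B A' B' X Y :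
  terminal_family T -> tsep T A0 B0 -> tsep T A B -> tsep T A' B' ->
  (forall P, P \in Tfree T A0 B0 -> P != [set s; t] -> ~~ (P \subset A :|: B)) ->
  (forall P, P \in Tfree T A0 B0 -> P != [set s; t] -> ~~ (P \subset A' :|: B')) ->
  admissible_sep (s |: A0) (t |: B0) (A :|: B :|: (A' :|: B')) X Y ->
  tsep T X Y.
Proof.
move=> TF tA0 tAB tAB' nsubAB nsubAB' /and4P[dXY sA0X tB0Y XYW].
apply: (tsep_extend TF tA0 dXY).
- exact: subset_trans (subsetUr _ _) sA0X.
- exact: subset_trans (subsetUr _ _) tB0Y.
move=> P PF; have PT : P \in T by case/setIdP: PF.
have [Pst|nP] := eqVneq P [set s; t].
  left; apply: pair_split (TF.1 P PT) dXY _ _; rewrite Pst; apply/card_gt0P.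
    by exists s; rewrite inE set21 (subsetP sA0X) ?setU11.
  by exists t; rewrite inE set22 (subsetP tB0Y) ?setU11.
right; apply: disjointWr XYW _.
rewrite disjoints_subset setCU subsetI -!disjoints_subset.
by rewrite !(tsep_disjoint_of_not_subset TF) ?nsubAB ?nsubAB'.
Qed.

Lemma min_admissible_of_min_ext S R W A B :
  (forall X Y, admissible_sep S R W X Y -> tsep T X Y) ->
  min_ext_tsep src tgt T S R A B -> A :|: B \subset W ->
  min_admissible src tgt S R W A B.
Proof.
move=> tsepW [[dAB _] [[SA RB] minAB]] ABW; split; first by apply/and4P.
move=> X Y admXY; rewrite -cost_leE; apply: minAB (tsepW _ _ admXY) _.
exact: admissible_extends admXY.
Qed.

Lemma max_admissible_of_maximal S R W A B :
  (forall X Y, admissible_sep S R W X Y -> tsep T X Y) ->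
  maximal_tsep src tgt T A B -> max_admissible src tgt S R W A B.
Proof.
move=> tsepW [_ maxAB] X Y admXY AX BY costXY.
have [[-> ->]|/eqP neq] := eqVneq (X, Y) (A, B); first by [].
have := maxAB X Y (tsepW _ _ admXY) (conj AX BY) neq.
by rewrite cost_ltE ltnNge costXY.
Qed.

Lemma min_ext_tsep_of_cost S R A B X Y :
  min_ext_tsep src tgt T S R A B -> tsep T X Y -> extends S R X Y ->
  d X + d Y = d A + d B -> min_ext_tsep src tgt T S R X Y.
Proof.
move=> [_ [_ minAB]] tXY extXY costXY; do 2!split=> //.
by move=> A' B' tA'B' ext'; rewrite cost_leE costXY -cost_leE; apply: minAB.
Qed.

End Admissible.

Ltac decide_membership :=
  rewrite ?inE; repeat match goal with |- context [?a \in ?A] => case: (a \in A) end.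

Section Uncrossing.

Variables (V E : finType) (src tgt : E -> V) (S R W As Bt As' Bt' : {set V}).
Local Notation d := (dcut src tgt).
Hypothesis minAB : min_admissible src tgt S R W As Bt.
Hypothesis minAB' : min_admissible src tgt S R W As' Bt'.

Lemma mem_sides x :
  [&& (x \in As) ==> (x \notin Bt), (x \in As') ==> (x \notin Bt'),
      (x \in S) ==> (x \in As) && (x \in As'),
      (x \in R) ==> (x \in Bt) && (x \in Bt')
    & [|| x \in As, x \in Bt, x \in As' | x \in Bt'] ==> (x \in W)].
Proof.
have /and4P[dAB SA RB ABW] := minAB.1; have /and4P[dAB' SA' RB' ABW'] := minAB'.1.
apply/and5P; split; apply/implyP.
- by move=> xA; rewrite (disjointFr dAB xA).
- by move=> xA'; rewrite (disjointFr dAB' xA').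
- by move=> xS; rewrite (subsetP SA) ?(subsetP SA').
- by move=> xR; rewrite (subsetP RB) ?(subsetP RB').
have ABABW : As :|: Bt :|: (As' :|: Bt') \subset W by rewrite subUset ABW ABW'.
by move=> xABAB; apply: (subsetP ABABW); rewrite !inE -!orbA.
Qed.

Ltac admissible_by_points :=
  rewrite /admissible_sep ?disjoints_subset; repeat (apply/andP; split);
  apply/subsetP => x; have := mem_sides x; decide_membership.

Lemma admissible_capcup : admissible_sep S R W (As :&: As') (Bt :|: Bt').
Proof. by admissible_by_points. Qed.

Lemma admissible_cupcap : admissible_sep S R W (As :|: As') (Bt :&: Bt').
Proof. by admissible_by_points. Qed.

Lemma min_cost_eq : d As + d Bt = d As' + d Bt'.
Proof. by apply/eqP; rewrite eqn_leq minAB.2 ?minAB'.1 // minAB'.2 ?minAB.1. Qed.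

Lemma cross_costs :
  d (As :&: As') + d (Bt :|: Bt') = d As + d Bt /\
  d (As :|: As') + d (Bt :&: Bt') = d As + d Bt.
Proof.
have := minAB.2 _ _ admissible_capcup; have := minAB.2 _ _ admissible_cupcap.
have := dcut_submodular src tgt As As'; have := dcut_submodular src tgt Bt Bt'.
have := min_cost_eq; lia.
Qed.

Lemma sides_subset :
  max_admissible src tgt S R W As Bt -> As' :|: Bt' \subset As :|: Bt.
Proof.
move=> maxAB.
(* The admissible pair (As :\: (Bt :|: Bt'), Bt :\: (As :|: As')) pays for
   the posimodular excess. *)
have [XA YB] : (As :|: As') :\: Bt = As /\ (Bt :|: Bt') :\: As = Bt.
  apply: maxAB; try by admissible_by_points.
  have := minAB.2 (As :\: (Bt :|: Bt')) (Bt :\: (As :|: As')) ltac:(by admissible_by_points).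
  have := minAB.2 (As :&: As') (Bt :&: Bt') ltac:(by admissible_by_points).
  have := dcut_posimodular src tgt (As :|: As') Bt.
  have := dcut_posimodular src tgt (Bt :|: Bt') As.
  have := dcut_submodular src tgt As As'; have := dcut_submodular src tgt Bt Bt'.
  have := min_cost_eq; lia.
rewrite subUset {1}setUC -!subDset -{2}YB -{1}XA.
by apply/andP; split; apply: setSD; apply: subsetUr.
Qed.

Lemma dcut_sides_eq : As :|: Bt = As' :|: Bt' -> d As = d As' /\ d Bt = d Bt'.
Proof.
move=> sidesU; have memU x : (x \in As) || (x \in Bt) = (x \in As') || (x \in Bt').
  by move/setP: sidesU => /(_ x); rewrite !inE.
have [eA eB] : (As :|: As') :\: Bt = As /\ Bt :\: (As :|: As') = Bt :&: Bt'.
  by split; apply/setP => x; have := memU x; have := mem_sides x; decide_membership.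
have [eA' eB'] : (As :|: As') :\: Bt' = As' /\ Bt' :\: (As :|: As') = Bt :&: Bt'.
  by split; apply/setP => x; have := memU x; have := mem_sides x; decide_membership.
have := dcut_posimodular src tgt (As :|: As') Bt; rewrite eA eB.
have := dcut_posimodular src tgt (As :|: As') Bt'; rewrite eA' eB'.
have := minAB.2 _ _ admissible_cupcap.
have := minAB.2 (As :&: As') Bt ltac:(by admissible_by_points).
have := minAB.2 (As :&: As') Bt' ltac:(by admissible_by_points).
have := dcut_submodular src tgt As As'; have := min_cost_eq; lia.
Qed.

End Uncrossing.

Theorem lemma5p3 (V E : finType) (src tgt : E -> V) (T : {set {set V}})
    (A0 B0 : {set V}) (k : nat) (s t : V)
    (As Bt As' Bt' : {set V}) :
  ts_instance src tgt T A0 B0 ->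
  [set s; t] \in Tfree T A0 B0 ->
  maximal_tsep src tgt T As Bt ->
  maximal_tsep src tgt T As' Bt' ->
  min_ext_tsep src tgt T (s |: A0) (t |: B0) As Bt ->
  min_ext_tsep src tgt T (s |: A0) (t |: B0) As' Bt' ->
  (forall P, P \in Tfree T A0 B0 -> P != [set s; t] -> ~~ (P \subset As :|: Bt)) ->
  (forall P, P \in Tfree T A0 B0 -> P != [set s; t] -> ~~ (P \subset As' :|: Bt')) ->
  [/\ dcut src tgt As = dcut src tgt As' /\ dcut src tgt Bt = dcut src tgt Bt',
      tsep T (As :&: As') (Bt :|: Bt') /\
        min_ext_tsep src tgt T (s |: A0) (t |: B0) (As :&: As') (Bt :|: Bt'),
      tsep T (As :|: As') (Bt :&: Bt') /\
        min_ext_tsep src tgt T (s |: A0) (t |: B0) (As :|: As') (Bt :&: Bt')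
    & As :|: Bt = As' :|: Bt'].
Proof.
move=> [_ [TF [_ tA0]]] _ maxAB maxAB' minAB minAB' nsubAB nsubAB'.
pose W := As :|: Bt :|: (As' :|: Bt').
have tsepW X Y : admissible_sep (s |: A0) (t |: B0) W X Y -> tsep T X Y.
  exact: (tsep_within TF tA0 maxAB.1 maxAB'.1 nsubAB nsubAB').
have mA := min_admissible_of_min_ext tsepW minAB (subsetUl _ _).
have mA' := min_admissible_of_min_ext tsepW minAB' (subsetUr _ _).
have xA := max_admissible_of_maximal tsepW maxAB.
have xA' := max_admissible_of_maximal tsepW maxAB'.
have sidesU : As :|: Bt = As' :|: Bt'.
  by apply/eqP; rewrite eqEsubset (sides_subset mA mA' xA) (sides_subset mA' mA xA').
have [costIU costUI] := cross_costs mA mA'.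
have admIU := admissible_capcup mA mA'; have admUI := admissible_cupcap mA mA'.
split=> //; first exact: dcut_sides_eq mA mA' sidesU.
  split; first exact: tsepW.
  exact: min_ext_tsep_of_cost minAB (tsepW _ _ admIU) (admissible_extends admIU) costIU.
split; first exact: tsepW.
exact: min_ext_tsep_of_cost minAB (tsepW _ _ admUI) (admissible_extends admUI) costUI.
Qed.
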